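(* Let $d=2$. There is a constant $c_2$ depending only on the dimension such that for all $N\ge1$, $n\ge1$ and integers $0=i_0<i_1<\cdots<i_n\le N$, $$\sum_{x_1,\dots,x_n\in\mathbb{Z}^2}\ \prod_{k=1}^n p_0^2(i_k-i_{k-1},x_k-x_{k-1})\left(\sum_{x\in\mathbb{Z}^2}|x|^2p_0(N-i_n,x-x_n)\right)^2\le c_2^nN^2\prod_{k=1}^n(i_k-i_{k-1})^{-1},$$ where $x_0=0$.
   Context: $p_0(n,x)$ is the probability that simple random walk on $\mathbb{Z}^2$ started at $0$ is at $x$ at time $n$; $|\cdot|$ is the Euclidean norm. *)

From HB Require Import structures.
From mathcomp Require Import all_boot all_order all_algebra.
From mathcomp Require Import all_classical all_reals.
From mathcomp Require Import ereal esum.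
Set Implicit Arguments. Unset Strict Implicit. Unset Printing Implicit Defensive.
Import Order.TTheory GRing.Theory Num.Theory.
Local Open Scope ring_scope.

Definition Z2 := (int * int)%type.
Definition subZ2 (x y : Z2) : Z2 := (x.1 - y.1, x.2 - y.2).
Definition originZ2 : Z2 := (0, 0).

Definition normZ2sq (R : realType) (x : Z2) : R :=
  (x.1%:~R) ^+ 2 + (x.2%:~R) ^+ 2.

(* p0 n x : probability that simple random walk on Z^2 started at 0 is at x
   at time n (forward equation: at each step one of the 4 neighbours w.p. 1/4). *)
Fixpoint p0 (R : realType) (n : nat) (x : Z2) : R :=
  match n with
  | 0 => (x == originZ2)%:R
  | m.+1 => (p0 R m (x.1 - 1, x.2) + p0 R m (x.1 + 1, x.2)
            + p0 R m (x.1, x.2 - 1) + p0 R m (x.1, x.2 + 1)) / 4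
  end.

From HB Require Import structures.
From mathcomp Require Import all_boot all_order all_algebra.
From mathcomp Require Import all_classical all_reals.
From mathcomp Require Import constructive_ereal ereal esum.
From mathcomp Require Import ring lra zify.
Import Order.TTheory GRing.Theory Num.Theory.
Local Open Scope ring_scope.
Local Open Scope classical_set_scope.

(* Rotating Z^2 by (a, b) |-> (a + b, a - b) factors p0 into two independent
   one-dimensional walks p1.  For these, p1_m(0)^2 (m + 1) + p1_m(1)^2 (m + 2) is
   nonincreasing in m, hence at most 1, and p1_m decreases away from 0 on each
   parity class; so p0(m, x) <= 1/(m + 1) and p0(m, x)^2 <= p0(m, x) / m.
   Comparison with supersolutions of the discrete heat equation gives
   E |u + S_m|^2 <= |u|^2 + m and E (|u + S_m|^2 + c)^2 <= (|u|^2 + c + 2 m)^2.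
   After bounding each inner sum by |x_n|^2 + (N - i_n), the second estimate lets
   one sum out x_n, ..., x_1 in turn, ending at (N - i_n + 2 i_n)^2 <= 4 N^2;
   hence c_2 = 8 works. *)

Section OneDimensionalWalk.
Variable R : realType.

Fixpoint p1 (m : nat) (j : int) : R :=
  match m with
  | 0 => (j == 0)%:R
  | m'.+1 => (p1 m' (j - 1) + p1 m' (j + 1)) / 2
  end.

Lemma p1_ge0 m j : 0 <= p1 m j.
Proof.
elim: m j => [|m IH] j /=; first by rewrite ler0n.
by rewrite divr_ge0 ?addr_ge0.
Qed.

Lemma p1N m j : p1 m (- j) = p1 m j.
Proof.
elim: m j => [|m IH] j /=; first by rewrite oppr_eq0.
rewrite (_ : - j - 1 = - (j + 1)); last by ring.
rewrite (_ : - j + 1 = - (j - 1)); last by ring.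
by rewrite !IH addrC.
Qed.

Lemma p1_ratio m j : p1 m (j + 2) * (m%:R + j%:~R + 2) = p1 m j * (m%:R - j%:~R).
Proof.
elim: m j => [|m IH] j /=.
  rewrite !add0r; case: (eqVneq j 0) => [->|j0]; first by rewrite oppr0 mulr0 mul0r.
  case: (eqVneq (j + 2) 0) => [j2|]; last by rewrite !mul0r.
  by rewrite mul0r (_ : j = - 2) ?mulN1r ?addNr ?mulr0 //; lia.
have h1 := IH (j + 1); have h2 := IH (j - 1).
rewrite (_ : j + 1 + 2 = j + 2 + 1) in h1; last by ring.
rewrite (_ : j - 1 + 2 = j + 1) in h2; last by ring.
rewrite (_ : j + 2 - 1 = j + 1); last by ring.
rewrite !intrD ?intrB -[(m.+1)%:R]natr1 in h1 h2 *.
lra.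
Qed.

Lemma p1S0 m : p1 m.+1 0 = p1 m 1.
Proof. by rewrite /= sub0r add0r p1N; move: (p1 m 1) => a; lra. Qed.

Lemma p1S1 m : p1 m.+1 1 * (m%:R + 2) = p1 m 0 * (m%:R + 1).
Proof.
have := p1_ratio m 0; rewrite /= add0r addr0 subr0 subrr (_ : 1 + 1 = 2) //.
by move: (p1 m 0) (p1 m 2) => a b h; lra.
Qed.

(* The left-hand side is nonincreasing in m because (m + 1) (m + 3) <= (m + 2)^2. *)
Lemma p1_energy_le1 m : p1 m 0 ^+ 2 * (m%:R + 1) + p1 m 1 ^+ 2 * (m%:R + 2) <= 1.
Proof.
elim: m => [|m IH]; first by rewrite /=; lra.
rewrite p1S0 -natr1.
have h := p1S1 m; have ha := p1_ge0 m 0; have hM : 0 <= (m%:R : R) := ler0n _ _.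
move: IH h ha; set a := p1 m 0; set b := p1 m 1; set t := p1 m.+1 1; set M := (m%:R : R).
move=> IH h ha.
suff key : t ^+ 2 * (M + 3) <= a ^+ 2 * (M + 1) by lra.
have hp : 0 < (M + 2) ^+ 2 by apply: exprn_gt0; lra.
rewrite -(ler_pM2r hp).
have -> : t ^+ 2 * (M + 3) * (M + 2) ^+ 2 = (t * (M + 2)) ^+ 2 * (M + 3) by ring.
rewrite h.
have -> : (a * (M + 1)) ^+ 2 * (M + 3) = a ^+ 2 * (M + 1) * ((M + 1) * (M + 3)) by ring.
apply: ler_wpM2l; first by rewrite mulr_ge0 ?sqr_ge0 //; lra.
nra.
Qed.

Lemma p1_shift2_le m (k : nat) : p1 m (k%:Z + 2) <= p1 m k%:Z.
Proof.
have h := p1_ratio m k%:Z; have hM : 0 <= (m%:R : R) := ler0n _ _.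
have hk : 0 <= ((k%:Z)%:~R : R) by rewrite ler0z.
have ha := p1_ge0 m k%:Z.
move: h; set a := p1 m k%:Z; set b := p1 m (k%:Z + 2); set K := ((k%:Z)%:~R : R) => h.
have hp : 0 < m%:R + K + 2 by lra.
by rewrite -(ler_pM2r hp) h ler_wpM2l //; lra.
Qed.

Lemma p1_sq_le m j : p1 m j ^+ 2 <= (m.+1%:R)^-1.
Proof.
wlog [k ->] : j / exists k : nat, j = k%:Z.
  move=> hw; case: j => k; first by apply: hw; exists k.
  by rewrite -p1N NegzE opprK; apply: hw; exists k.+1.
have hm : 0 < (m.+1%:R : R) by rewrite ltr0n.
have h := p1_energy_le1 m; have hM : 0 <= (m%:R : R) := ler0n _ _.
have h01 (l : int) : l = 0 \/ l = 1 -> p1 m l ^+ 2 <= (m.+1%:R)^-1.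
  move=> hj; rewrite -[_^-1]mul1r ler_pdivlMr // -natr1.
  by have := sqr_ge0 (p1 m 0); have := sqr_ge0 (p1 m 1); case: hj => ->; nra.
suff : p1 m k%:Z ^+ 2 <= (m.+1%:R)^-1 /\ p1 m k.+1%:Z ^+ 2 <= (m.+1%:R)^-1 by case.
elim: k => [|k [IH1 IH2]]; first by split; apply: h01; [left|right].
split => //; apply: le_trans IH1.
rewrite (_ : k.+2%:Z = k%:Z + 2); last by rewrite -addn2 PoszD.
by rewrite lerXn2r ?nnegrE ?p1_ge0 ?p1_shift2_le.
Qed.

End OneDimensionalWalk.

Lemma p0_factor (R : realType) m (x : Z2) :
  p0 R m x = p1 R m (x.1 + x.2) * p1 R m (x.1 - x.2).
Proof.
elim: m x => [|m IH] [a b] /=.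
  rewrite -natrM mulnb /originZ2 xpair_eqE; congr (_%:R).
  by case: (a =P 0); case: (b =P 0); case: (a + b =P 0); case: (a - b =P 0) => //=; lia.
rewrite !IH /=.
rewrite (_ : a - 1 + b = a + b - 1); last by ring.
rewrite (_ : a - 1 - b = a - b - 1); last by ring.
rewrite (_ : a + 1 + b = a + b + 1); last by ring.
rewrite (_ : a + 1 - b = a - b + 1); last by ring.
rewrite (_ : a + (b - 1) = a + b - 1); last by ring.
rewrite (_ : a - (b - 1) = a - b + 1); last by ring.
rewrite (_ : a + (b + 1) = a + b + 1); last by ring.
rewrite (_ : a - (b + 1) = a - b - 1); last by ring.
by field.
Qed.

Lemma p0_ge0 (R : realType) m x : 0 <= p0 R m x.
Proof. by rewrite p0_factor mulr_ge0 ?p1_ge0. Qed.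

Lemma p0_le (R : realType) m x : p0 R m x <= (m.+1%:R)^-1.
Proof.
rewrite p0_factor.
have := p1_sq_le R m (x.1 + x.2); have := p1_sq_le R m (x.1 - x.2).
have := sqr_ge0 (p1 R m (x.1 + x.2) - p1 R m (x.1 - x.2)).
move: (p1 R m _) (p1 R m _) ((m.+1%:R : R)^-1) => u v c; nra.
Qed.

Lemma p0_sq_le (R : realType) m x : (0 < m)%N -> p0 R m x ^+ 2 <= (m%:R)^-1 * p0 R m x.
Proof.
move=> m_gt0; rewrite expr2 ler_wpM2r ?p0_ge0 //.
by rewrite (le_trans (p0_le R m x)) // lef_pV2 ?posrE ?ltr0n ?ler_nat.
Qed.

Lemma esumZl_le (R : realType) (T : choiceType) (S : set T) (k : R) (f : T -> \bar R) :
  0 <= k -> (forall t, (0 <= f t)%E) ->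
  (\esum_(t in S) (k%:E * f t) <= k%:E * \esum_(t in S) f t)%E.
Proof.
move=> k0 f0; apply: ge_ereal_sup => _ [X [finX XS] <-].
rewrite -ge0_mule_fsumr // lee_wpmul2l ?lee_fin //.
by apply: ereal_sup_ubound; exists X.
Qed.

Lemma subZ2_eq0 (w u : Z2) : (subZ2 w u == originZ2) = (w == u).
Proof. by case: w u => [a b] [c d]; rewrite /subZ2 /originZ2 !xpair_eqE !subr_eq0. Qed.

Section Supersolution.
Variable R : realType.
Local Open Scope ereal_scope.

Lemma esum_p0_le_supersolution (h : Z2 -> R) (G : nat -> Z2 -> R) :
  (forall w, 0 <= h w)%R -> (forall u, h u <= G 0%N u)%R ->
  (forall m u, (G m (u.1 + 1, u.2) + G m (u.1 - 1, u.2) + G m (u.1, u.2 + 1)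
      + G m (u.1, u.2 - 1)) / 4 <= G m.+1 u)%R ->
  forall m u, \esum_(w in [set: Z2]) (p0 R m (subZ2 w u) * h w)%:E <= (G m u)%:E.
Proof.
move=> h0 hG0 hG; elim=> [|m IH] u.
  rewrite (esumID [set u]); last by move=> w _; rewrite lee_fin mulr_ge0 ?p0_ge0.
  rewrite [X in _ + X]esum1 ?adde0; last first.
    by move=> w [_ /eqP]; rewrite /= subZ2_eq0 => /negPf ->; rewrite mul0r.
  rewrite setTI esum_set1; last by rewrite lee_fin mulr_ge0 ?p0_ge0.
  by rewrite /= subZ2_eq0 eqxx mul1r lee_fin.
pose f (v w : Z2) := (p0 R m (subZ2 w v) * h w)%:E.
have f0 v w : 0 <= f v w by rewrite lee_fin mulr_ge0 ?p0_ge0.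
have -> : \esum_(w in [set: Z2]) (p0 R m.+1 (subZ2 w u) * h w)%:E =
    \esum_(w in [set: Z2]) ((4^-1)%R%:E * (f (u.1 + 1, u.2)%R w + f (u.1 - 1, u.2)%R w
      + f (u.1, u.2 + 1)%R w + f (u.1, u.2 - 1)%R w)).
  apply: eq_esum => w _; rewrite /f -!EFinD -EFinM /subZ2 /=.
  rewrite (_ : (w.1 - u.1 - 1 = w.1 - (u.1 + 1))%R); last by ring.
  rewrite (_ : (w.1 - u.1 + 1 = w.1 - (u.1 - 1))%R); last by ring.
  rewrite (_ : (w.2 - u.2 - 1 = w.2 - (u.2 + 1))%R); last by ring.
  rewrite (_ : (w.2 - u.2 + 1 = w.2 - (u.2 - 1))%R); last by ring.
  by congr (_%:E); ring.
apply: le_trans; first by apply: esumZl_le => // w; rewrite !adde_ge0.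
rewrite !esumD //; try by move=> w _; rewrite ?adde_ge0.
apply: (@le_trans _ _ ((4^-1)%R%:E * (G m (u.1 + 1, u.2)%R + G m (u.1 - 1, u.2)%R
    + G m (u.1, u.2 + 1)%R + G m (u.1, u.2 - 1)%R)%:E)).
  by rewrite lee_wpmul2l ?lee_fin ?invr_ge0 // !EFinD; repeat apply: leeD; apply: IH.
by rewrite -EFinM lee_fin mulrC.
Qed.
End Supersolution.

Section HeatFlowBounds.
Variable R : realType.
Local Open Scope ereal_scope.

Lemma normZ2sq_ge0 z : (0 <= normZ2sq R z)%R.
Proof. by rewrite addr_ge0 ?sqr_ge0. Qed.

Lemma normZ2sq_origin : normZ2sq R originZ2 = 0%R.
Proof. by rewrite /normZ2sq /= mulr0z expr0n /= addr0. Qed.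

Definition quartic (c : R) (z : Z2) : R := (normZ2sq R z + c) ^+ 2.

Lemma quartic_ge0 c z : (0 <= quartic c z)%R.
Proof. exact: sqr_ge0. Qed.

Lemma esum_normZ2sq_p0_le m u :
  \esum_(y in [set: Z2]) (normZ2sq R y * p0 R m (subZ2 y u))%:E
    <= (normZ2sq R u + m%:R)%:E.
Proof.
under eq_esum do rewrite mulrC.
apply: (@esum_p0_le_supersolution _ _ (fun m u => normZ2sq R u + m%:R)%R) => //.
- exact: normZ2sq_ge0.
- by move=> v; rewrite addr0.
move=> k [a b]; rewrite /normZ2sq /= !intrD -[k.+1%:R]natr1.
move: (a%:~R : R) (b%:~R : R) (k%:R : R) => A B K.
by rewrite [X in (X <= _)%R](_ : _ = A ^+ 2 + B ^+ 2 + (K + 1))%R //; field.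
Qed.

Lemma esum_p0_quartic_le (c : R) m u : (0 <= c)%R ->
  \esum_(w in [set: Z2]) (p0 R m (subZ2 w u) * quartic c w)%:E
    <= (quartic (c + 2 * m%:R) u)%:E.
Proof.
move=> c0.
apply: (@esum_p0_le_supersolution _ _ (fun m u => quartic (c + 2 * m%:R) u)%R).
- by move=> w; apply: quartic_ge0.
- by move=> v; rewrite mulr0 addr0.
move=> k [a b]; rewrite /quartic /normZ2sq /= !intrD -[k.+1%:R]natr1.
have hK : (0 <= k%:R :> R)%R := ler0n _ _.
move: (a%:~R : R) (b%:~R : R) (k%:R : R) hK => A B K hK.
set C := (c + 2 * K)%R; rewrite (_ : (c + 2 * (K + 1) = C + 2)%R); last by rewrite /C; ring.
have -> : ((((A + 1) ^+ 2 + B ^+ 2 + C) ^+ 2 + ((A - 1) ^+ 2 + B ^+ 2 + C) ^+ 2 +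
    (A ^+ 2 + (B + 1) ^+ 2 + C) ^+ 2 + (A ^+ 2 + (B - 1) ^+ 2 + C) ^+ 2) / 4 =
    (A ^+ 2 + B ^+ 2 + (C + 2)) ^+ 2 - (2 * C + 3))%R by field.
by rewrite lerBlDr lerDl /C; lra.
Qed.
End HeatFlowBounds.

Definition ffun_rcons {T : Type} {n : nat} (x : {ffun 'I_n.+1 -> T}) (w : T) :
    {ffun 'I_n.+2 -> T} :=
  [ffun j : 'I_n.+2 => if (j < n.+1)%N then x (inord j) else w].

Lemma inord_max n : (inord n : 'I_n.+1) = ord_max.
Proof. by apply: val_inj; rewrite /= inordK. Qed.

Section FfunRcons.
Variable T : Type.

Lemma ffun_rcons_inord n (x : {ffun 'I_n.+1 -> T}) w k :
  (k < n.+1)%N -> ffun_rcons x w (inord k) = x (inord k).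
Proof. by move=> hk; rewrite ffunE inordK ?hk // ltnS ltnW. Qed.

Lemma ffun_rcons_max n (x : {ffun 'I_n.+1 -> T}) w : ffun_rcons x w ord_max = w.
Proof. by rewrite ffunE /= ltnn. Qed.

Lemma prod_steps_rcons (S : pzSemiRingType) n (F : nat -> T -> T -> S)
    (x : {ffun 'I_n.+1 -> T}) w :
  \prod_(k < n.+1) F k (ffun_rcons x w (inord k.+1)) (ffun_rcons x w (inord k)) =
  (\prod_(k < n) F k (x (inord k.+1)) (x (inord k))) * F n w (x ord_max).
Proof.
rewrite big_ord_recr /= inord_max ffun_rcons_max ffun_rcons_inord // inord_max.
by congr (_ * _); apply: eq_bigr => k _; rewrite !ffun_rcons_inord // ltnS // ltnW.
Qed.

Lemma ffun_rcons_bij n (z : T) :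
  set_bij ([set x : {ffun 'I_n.+1 -> T} | x ord0 = z] `*`` (fun=> [set: T]))
          [set x : {ffun 'I_n.+2 -> T} | x ord0 = z] (fun p => ffun_rcons p.1 p.2).
Proof.
split.
- move=> [x w] [/= x0 _]; rewrite -[ord0](@inord_val n.+1) /= ffun_rcons_inord // -x0.
  by congr (x _); apply: val_inj; rewrite /= inordK.
- move=> [x1 w1] [x2 w2] _ _ /= e.
  have -> : w1 = w2 by rewrite -(ffun_rcons_max _ x1 w1) e ffun_rcons_max.
  congr (_, _); apply/ffunP => i.
  by have := congr1 (fun f : {ffun _ -> T} => f (inord i)) e; rewrite /= !ffun_rcons_inord // inord_val.
- move=> x /= x0; exists ([ffun i : 'I_n.+1 => x (inord i)], x ord_max).
    by split => //=; rewrite ffunE -x0; congr (x _); apply: val_inj; rewrite /= inordK.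
  apply/ffunP => j; rewrite !ffunE /=; case: ifPn => hj; first by rewrite inordK // inord_val.
  congr (x _); apply: val_inj => /=.
  by have := ltn_ord j; rewrite ltnS leq_eqVlt (negPf hj) orbF => /eqP.
Qed.
End FfunRcons.

Section PathSum.
Variable R : realType.
Local Open Scope ereal_scope.

Definition path_weight n (m : nat -> nat) (x : {ffun 'I_n.+1 -> Z2}) : R :=
  \prod_(k < n) p0 R (m k) (subZ2 (x (inord k.+1)) (x (inord k))).

Lemma path_weight_ge0 n m x : (0 <= path_weight n m x)%R.
Proof. by apply: prodr_ge0 => k _; apply: p0_ge0. Qed.

Lemma esum_path_quartic_le n (m : nat -> nat) (z : Z2) (c : R) : (0 <= c)%R ->
  \esum_(x in [set x : {ffun 'I_n.+1 -> Z2} | x ord0 = z])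
    (path_weight n m x * quartic R c (x ord_max))%:E
  <= (quartic R (c + 2 * (\sum_(k < n) m k)%N%:R) z)%:E.
Proof.
elim: n c z => [|n IH] c z c0.
  have -> : [set x : {ffun 'I_1 -> Z2} | x ord0 = z] = [set [ffun => z]].
    apply/seteqP; split => x /=; last by move=> ->; rewrite ffunE.
    by move=> x0; apply/ffunP => i; rewrite ffunE -x0 (ord1 i).
  rewrite esum_set1; last by rewrite lee_fin mulr_ge0 ?path_weight_ge0 ?quartic_ge0.
  by rewrite /path_weight !big_ord0 ffunE mul1r mulr0 addr0.
pose F x w := (path_weight n.+1 m (ffun_rcons x w) * quartic R c (ffun_rcons x w ord_max))%:E.
rewrite (reindex_esum _ _ _ _ (@ffun_rcons_bij _ n z)) -(esum_esum (a := F)); last first.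
  by move=> x w _ _; rewrite lee_fin mulr_ge0 ?path_weight_ge0 ?quartic_ge0.
have -> : (c + 2 * (\sum_(k < n.+1) m k)%N%:R = c + 2 * (m n)%:R + 2 * (\sum_(k < n) m k)%N%:R)%R.
  by rewrite big_ord_recr natrD mulrDr addrAC addrA.
apply: le_trans _ (IH _ z _); last by rewrite addr_ge0 ?mulr_ge0 ?ler0n.
apply: le_esum => x _.
under eq_esum do rewrite /F /path_weight
  (prod_steps_rcons _ _ _ (fun k a b => p0 R (m k) (subZ2 a b))) ffun_rcons_max
  -/(path_weight n m x) -mulrA EFinM.
apply: le_trans.
  apply: esumZl_le => [|w]; first exact: path_weight_ge0.
  by rewrite lee_fin mulr_ge0 ?p0_ge0 ?quartic_ge0.
by rewrite EFinM lee_wpmul2l ?lee_fin ?path_weight_ge0 ?esum_p0_quartic_le.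
Qed.
End PathSum.

Section SquaredKernels.
Variable R : realType.
Local Open Scope ereal_scope.

Lemma prod_p0_sq_le n (m : nat -> nat) (z : 'I_n -> Z2) : (forall k, (k < n)%N -> (0 < m k)%N) ->
  (\prod_(k < n) p0 R (m k) (z k) ^+ 2
    <= (\prod_(k < n) (m k)%:R^-1) * \prod_(k < n) p0 R (m k) (z k))%R.
Proof.
move=> m_gt0; rewrite -big_split /=; apply: ler_prod => k _.
by rewrite sqr_ge0 p0_sq_le ?m_gt0.
Qed.

Lemma summand_le n (m : nat -> nat) (M : R) (x : {ffun 'I_n.+1 -> Z2}) (S : \bar R) :
  (forall k, (k < n)%N -> (0 < m k)%N) ->
  0 <= S -> S <= (normZ2sq R (x ord_max) + M)%:E ->
  (\prod_(k < n) p0 R (m k) (subZ2 (x (inord k.+1)) (x (inord k))) ^+ 2)%:E * S * S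
    <= (\prod_(k < n) (m k)%:R^-1)%:E * (path_weight R n m x * quartic R M (x ord_max))%:E.
Proof.
move=> m_gt0 S_ge0 S_le.
set P := (\prod_(k < n) _)%R; set T := (normZ2sq R (x ord_max) + M)%R in S_le *.
have P_ge0 : (0 <= P)%R by apply: prodr_ge0 => k _; apply: sqr_ge0.
apply: le_trans (lee_pmul _ _ (lee_pmul _ _ (lexx _) S_le) S_le) _;
  rewrite ?mule_ge0 ?lee_fin //.
rewrite /quartic -/T mulrA -[(P * T * T)%R]mulrA -expr2.
by rewrite ler_wpM2r ?sqr_ge0 ?prod_p0_sq_le.
Qed.
End SquaredKernels.

Lemma sum_ord_increments (f : nat -> nat) n :
  (forall k, (k < n)%N -> (f k <= f k.+1)%N) ->
  (\sum_(k < n) (f k.+1 - f k) = f n - f 0)%N.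
Proof.
move=> f_incr; rewrite -(big_mkord xpredT (fun k => f k.+1 - f k)%N).
by rewrite telescope_sumn_in // => k /andP[_ /f_incr].
Qed.

Lemma shifted_sq_le_pow8 (R : realFieldType) (N a n : nat) : (a <= N)%N -> (0 < n)%N ->
  (((N - a)%N%:R + 2 * a%:R) ^+ 2 <= 8 ^+ n * N%:R ^+ 2 :> R).
Proof.
move=> aN; case: n => // n _.
apply: (@le_trans _ _ ((2 * N%:R) ^+ 2)).
  rewrite lerXn2r ?nnegrE ?addr_ge0 ?mulr_ge0 ?ler0n //.
  by rewrite -natrM -natrD -natrM ler_nat; lia.
have h8 : (1 <= 8 ^+ n :> R) by apply: exprn_ege1; lra.
by rewrite exprMn ler_wpM2r ?sqr_ge0 // expr2 exprS; lra.
Qed.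

Theorem lemma22 (R : realType) :
  exists c2 : R, forall (N n : nat) (i : nat -> nat),
    (1 <= N)%N -> (1 <= n)%N ->
    i 0%N = 0%N ->
    (forall k, (k < n)%N -> (i k < i k.+1)%N) ->
    (i n <= N)%N ->
    ((\esum_(x in [set x : {ffun 'I_n.+1 -> Z2} | x ord0 = originZ2])
       ((\prod_(k < n)
           (p0 R (i k.+1 - i k) (subZ2 (x (inord k.+1)) (x (inord k)))) ^+ 2)%:E
        * (\esum_(y in [set: Z2])
             (normZ2sq R y * p0 R (N - i n) (subZ2 y (x ord_max)))%:E)
        * (\esum_(y in [set: Z2])
             (normZ2sq R y * p0 R (N - i n) (subZ2 y (x ord_max)))%:E)))
    <= (c2 ^+ n * (N%:R) ^+ 2 * \prod_(k < n) ((i k.+1 - i k)%:R)^-1)%:E)%E.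
Proof.
exists 8 => N n i _ n_gt0 i0 i_incr i_le.
pose m k := (i k.+1 - i k)%N; set M := (N - i n)%N.
have m_gt0 k : (k < n)%N -> (0 < m k)%N by move/i_incr; rewrite subn_gt0.
have sum_m : (\sum_(k < n) m k)%N = i n.
  by rewrite sum_ord_increments ?i0 ?subn0 // => k /i_incr/ltnW.
apply: le_trans.
  apply: le_esum => x _; apply: (@summand_le R n m M%:R x _ m_gt0).
    by apply: esum_ge0 => y _; rewrite lee_fin mulr_ge0 ?normZ2sq_ge0 ?p0_ge0.
  exact: esum_normZ2sq_p0_le.
have Pm_ge0 : (0 <= \prod_(k < n) (m k)%:R^-1 :> R)%R.
  by apply: prodr_ge0 => k _; rewrite invr_ge0.
apply: le_trans.
  apply: esumZl_le => // x.
  by rewrite lee_fin mulr_ge0 ?path_weight_ge0 ?quartic_ge0.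
apply: le_trans.
  apply: lee_wpmul2l; first by rewrite lee_fin.
  by apply: esum_path_quartic_le.
rewrite -EFinM lee_fin sum_m mulrC ler_wpM2r // /quartic normZ2sq_origin add0r.
exact: shifted_sq_le_pow8.
Qed.
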